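(* Let $p\ge5$, let $\lambda$ be the leftmost assignment and $\alpha$ any assignment on the white metallic tree. For every positive integer $\nu$, let $\lambda_\ell(\nu)$ and $\alpha_\ell(\nu)$ be the leftmost (smallest) son of $\nu$ in $\mathcal W_\lambda$ and in $\mathcal W_\alpha$ respectively, and $\delta_{\lambda\alpha}(\nu)=\alpha_\ell(\nu)-\lambda_\ell(\nu)$. Then $0\le\delta_{\lambda\alpha}(\nu)\le 1$ for every $\nu$.
   Context: Fix $p\ge5$. White metallic tree under an assignment $\alpha$, $\mathcal W_\alpha$: nodes are the positive integers, each black or white; root $1$ is white; nodes are processed in increasing order and node $\nu$ receives $p-2$ sons if it is white and $p-3$ sons if it is black, namely the smallest integers not yet used, in increasing order; an assignment $\alpha$ specifies, for each node $\nu$, the position (among the sons of $\nu$, leftmost = position $1$) of its unique black son, all other sons being white (the position may depend on the node). The leftmost assignment $\lambda$ always puts the black son at position $1$. *)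

From mathcomp Require Import all_boot.
Set Implicit Arguments. Unset Strict Implicit. Unset Printing Implicit Defensive.

(* White metallic tree W_alpha for a fixed p.  Nodes are positive integers
   (node 0 is unused).  A colouring is a function col : nat -> bool,
   [true] meaning black.  An assignment alpha : nat -> nat gives for each node
   nu the position (1-based, leftmost = 1) of its unique black son. *)

Definition nsons (p : nat) (b : bool) : nat := if b then p - 3 else p - 2.

(* leftmost son of node nu >= 1 when nodes are processed in increasing order
   and each receives the smallest unused integers: node 1 gets 2, 3, ...;
   node nu gets the nsons(col nu) integers starting at lson col nu. *)
Definition lson (p : nat) (col : nat -> bool) (nu : nat) : nat :=
  2 + sumn [seq nsons p (col i) | i <- iota 1 nu.-1].

(* colour of node m computed with fuel k (correct whenever m <= k):
   m is black iff its father nu (the node with lson nu <= m < lson nu + #sons)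
   has its black son at position alpha nu, i.e. m = lson nu + alpha nu - 1.
   The root 1 is white. *)
Fixpoint blk (p : nat) (alpha : nat -> nat) (k m : nat) : bool :=
  match k with
  | 0 => false
  | k'.+1 =>
      let col := blk p alpha k' in
      has (fun nu => (lson p col nu <= m < lson p col nu + nsons p (col nu))
                     && (m == lson p col nu + alpha nu - 1))
          (iota 1 m.-1)
  end.

Definition black (p : nat) (alpha : nat -> nat) (m : nat) : bool :=
  blk p alpha m m.

Definition leftmost_son (p : nat) (alpha : nat -> nat) (nu : nat) : nat :=
  lson p (black p alpha) nu.

Definition assignment (p : nat) (alpha : nat -> nat) : Prop :=
  forall nu, 0 < nu -> 1 <= alpha nu <= nsons p (black p alpha nu).

Definition leftmost_assignment : nat -> nat := fun _ => 1.

(* Counting sons, alpha_l(nu+1) = 2 + nu (p-2) - B_alpha(nu), where B_alpha(nu)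
   is the number of black nodes among 1..nu; so delta(nu+1) = B_lambda(nu) -
   B_alpha(nu).  The k-th black node of W_alpha is the black son of k, which lies
   in [alpha_l(k), alpha_l(k+1)); in W_lambda it is lambda_l(k) itself.  By strong
   induction, lambda_l(k) <= alpha_l(k) <= lambda_l(k) + 1 for the relevant
   k <= nu, so the k-th black node of W_lambda comes no later than that of
   W_alpha, and the (k+1)-th black node of W_alpha no later than the (k+2)-th
   of W_lambda: 0 <= B_lambda(nu) - B_alpha(nu) <= 1. *)

From mathcomp Require Import all_boot zify.
Set Implicit Arguments. Unset Strict Implicit. Unset Printing Implicit Defensive.

Lemma lson_ext p (c1 c2 : nat -> bool) nu :
  (forall i, 0 < i < nu -> c1 i = c2 i) -> lson p c1 nu = lson p c2 nu.
Proof.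
move=> c12; rewrite /lson; congr (2 + sumn _); apply/eq_in_map => i.
by rewrite mem_iota => /andP[i_gt0 i_lt]; rewrite c12 // i_gt0; lia.
Qed.

Lemma lson_succ p col nu : 0 < nu ->
  lson p col nu.+1 = lson p col nu + nsons p (col nu).
Proof.
case: nu => // n _.
by rewrite /lson !succnK -[n.+1]addn1 iotaD map_cat sumn_cat /= addn0 [1 + n]addnC addnA.
Qed.

Lemma lson_homo p col : {homo lson p col : i j / i <= j}.
Proof.
apply: homo_leq => [x//|y x z|[|i]]; [exact: leq_trans | by [] |].
by rewrite [lson _ _ i.+2]lson_succ // leq_addr.
Qed.

Lemma lson_gt p col nu : 3 < p -> 0 < nu -> nu < lson p col nu.
Proof.
move=> p_gt3; elim: nu => [|[|nu] IH] // _.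
rewrite lson_succ //; have := IH isT; rewrite /nsons; case: (col _); lia.
Qed.

Lemma sumn_nsons_count p col (s : seq nat) : 2 < p ->
  sumn [seq nsons p (col i) | i <- s] + count col s = size s * (p - 2).
Proof. by move=> p_gt2; elim: s => //= i s IH; rewrite mulSn -IH /nsons; case: (col i) => /=; lia. Qed.

Lemma lson_count p col n : 2 < p ->
  lson p col n.+1 + count col (iota 1 n) = 2 + n * (p - 2).
Proof. by move=> p_gt2; rewrite /lson -addnA sumn_nsons_count // size_iota. Qed.

Definition is_black_son p alpha col m nu :=
  (lson p col nu <= m < lson p col nu + nsons p (col nu))
  && (m == lson p col nu + alpha nu - 1).

Lemma has_black_son_ext p alpha (c1 c2 : nat -> bool) m :
  (forall i, 0 < i < m -> c1 i = c2 i) ->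
  has (is_black_son p alpha c1 m) (iota 1 m.-1)
  = has (is_black_son p alpha c2 m) (iota 1 m.-1).
Proof.
move=> c12; apply: eq_in_has => nu; rewrite mem_iota => /andP[nu_gt0 nu_lt].
rewrite /is_black_son c12 ?nu_gt0; last by lia.
by rewrite (@lson_ext p c1 c2) // => i /andP[i_gt0 i_lt]; rewrite c12 ?i_gt0 //; lia.
Qed.

Lemma blk_stable p alpha m k1 k2 : m <= k1 -> m <= k2 ->
  blk p alpha k1 m = blk p alpha k2 m.
Proof.
elim/ltn_ind: m k1 k2 => m IH [|k1] [|k2] //; try by case: m {IH}.
move=> m_le1 m_le2 /=; apply: has_black_son_ext => i /andP[_ i_lt].
by apply: IH; lia.
Qed.

Lemma blackE p alpha m :
  black p alpha m = has (is_black_son p alpha (black p alpha) m) (iota 1 m.-1).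
Proof.
case: m => [//|m]; rewrite /black /=; apply: has_black_son_ext => i /andP[_ i_lt].
by apply: blk_stable; lia.
Qed.

Section Assignment.

Variables (p : nat) (alpha : nat -> nat).
Hypotheses (p_gt3 : 3 < p) (alphaP : assignment p alpha).

Local Notation col := (black p alpha).

Definition black_son nu := lson p col nu + alpha nu - 1.

Definition nblack n := count col (iota 1 n).

Lemma black_son_bounds nu : 0 < nu ->
  lson p col nu <= black_son nu < lson p col nu.+1.
Proof. by move=> nu_gt0; have := alphaP nu_gt0; rewrite lson_succ // /black_son; lia. Qed.

Lemma black_son_gt nu : 0 < nu -> nu < black_son nu.
Proof.
move=> nu_gt0; have := black_son_bounds nu_gt0; have := lson_gt col p_gt3 nu_gt0.
lia.
Qed.

Lemma black_son_mono : {in [pred k | 0 < k] &, {mono black_son : i j / i <= j}}.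
Proof.
apply: leq_mono_in => i j i_gt0 j_gt0 ij /=.
have := black_son_bounds i_gt0; have := black_son_bounds j_gt0.
have := lson_homo p col ij; lia.
Qed.

Lemma black_son_lt : {in [pred k | 0 < k] &, {mono black_son : i j / i < j}}.
Proof. exact: leqW_mono_in black_son_mono. Qed.

Lemma black_son_inj : {in [pred k | 0 < k] &, injective black_son}.
Proof. exact: incn_inj_in black_son_mono. Qed.

Lemma blackP m : reflect (exists2 nu, 0 < nu & black_son nu = m) (black p alpha m).
Proof.
rewrite blackE; apply: (iffP hasP) => [[nu] | [nu nu_gt0 <-]].
  by rewrite mem_iota /is_black_son => /andP[nu_gt0 _] /andP[_ /eqP->]; exists nu.
exists nu; first by rewrite mem_iota nu_gt0; have := black_son_gt nu_gt0; lia.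
rewrite /is_black_son eqxx andbT -lson_succ //; exact: black_son_bounds.
Qed.

Lemma nblack_succ n : nblack n.+1 = nblack n + black p alpha n.+1.
Proof. by rewrite /nblack -[n.+1]addn1 iotaD count_cat /= add1n addn1 addn0. Qed.

(* The black nodes are the black sons, which increase with their fathers: the
   k-th black node is [black_son k]. *)
Lemma leq_nblack n k : 0 < k -> (k <= nblack n) = (black_son k <= n).
Proof.
elim: n k => [|n IH] k k_gt0.
  by have := black_son_gt k_gt0; rewrite /nblack /=; lia.
rewrite nblack_succ [RHS]leq_eqVlt ltnS -IH //.
have [/blackP[nu nu_gt0 son_nu]|not_black] /= := boolP (black p alpha n.+1).
  have nu_eq : nu = (nblack n).+1.
    apply/eqP; rewrite eqn_leq ltnNge IH // son_nu ltnn andbT leqNgt.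
    apply/negP => lt_nu.
    have : black_son (nblack n).+1 < black_son nu by rewrite black_son_lt ?inE.
    by have := IH _ (ltn0Sn (nblack n)); rewrite ltnn son_nu; lia.
  by rewrite -son_nu (inj_in_eq black_son_inj) ?inE // nu_eq addn1 leq_eqVlt.
rewrite addn0 orb_idl // => /eqP son_k; case/negP: not_black.
by apply/blackP; exists k.
Qed.

End Assignment.

Lemma black_son_leftmost p nu :
  black_son p leftmost_assignment nu = leftmost_son p leftmost_assignment nu.
Proof. exact: addnK. Qed.

Lemma assignment_leftmost p : 3 < p -> assignment p leftmost_assignment.
Proof. by move=> p_gt3 nu _; rewrite /leftmost_assignment /nsons; case: (black _ _ _); lia. Qed.

Section Comparison.

Variables (p : nat) (alpha : nat -> nat).
Hypotheses (p_gt3 : 3 < p) (alphaP : assignment p alpha).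

Local Notation lam := leftmost_assignment.
Let lamP := assignment_leftmost p_gt3.

Lemma nblack_leq_leftmost n :
  (forall nu, 0 < nu <= n -> leftmost_son p lam nu <= leftmost_son p alpha nu) ->
  nblack p alpha n <= nblack p lam n.
Proof.
move=> le_son; set k := nblack p alpha n.
have [->//|k_gt0] := posnP k.
have : black_son p alpha k <= n by rewrite -(leq_nblack p_gt3 alphaP).
rewrite (leq_nblack p_gt3 lamP) // black_son_leftmost.
have := black_son_bounds p_gt3 alphaP k_gt0; have := black_son_gt p_gt3 alphaP k_gt0.
have := le_son k; rewrite /leftmost_son; lia.
Qed.

Lemma nblack_leftmost_leq n :
  (forall nu, 0 < nu <= n -> leftmost_son p alpha nu <= leftmost_son p lam nu + 1) ->
  nblack p lam n <= (nblack p alpha n).+1.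
Proof.
move=> le_son; set k := nblack p alpha n; rewrite leqNgt; apply/negP => lt_k.
have : black_son p lam k.+2 <= n by rewrite -(leq_nblack p_gt3 lamP).
rewrite black_son_leftmost => son_le.
have := leq_nblack p_gt3 alphaP n (ltn0Sn k); rewrite -/k ltnn.
have := black_son_bounds p_gt3 alphaP (ltn0Sn k).
have := lson_gt (black p lam) p_gt3 (ltn0Sn k.+1).
have := le_son k.+2; rewrite /leftmost_son in son_le *; lia.
Qed.

End Comparison.

Theorem lemma6 (p : nat) (alpha : nat -> nat) :
  5 <= p -> assignment p alpha ->
  forall nu : nat, 0 < nu ->
    leftmost_son p leftmost_assignment nu <= leftmost_son p alpha nu
    <= leftmost_son p leftmost_assignment nu + 1.
Proof.
move=> p_ge5 alphaP; have p_gt3 : 3 < p := ltnW p_ge5.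
elim/ltn_ind => -[//|n] IH _.
have IHn nu : 0 < nu <= n -> leftmost_son p leftmost_assignment nu
    <= leftmost_son p alpha nu <= leftmost_son p leftmost_assignment nu + 1.
  by case/andP=> nu_gt0 nu_le; apply: IH.
have lo : nblack p alpha n <= nblack p leftmost_assignment n.
  by apply: nblack_leq_leftmost => // nu /IHn/andP[].
have hi : nblack p leftmost_assignment n <= (nblack p alpha n).+1.
  by apply: nblack_leftmost_leq => // nu /IHn/andP[].
have := lson_count (black p alpha) n (ltnW p_gt3).
have := lson_count (black p leftmost_assignment) n (ltnW p_gt3).
by rewrite /leftmost_son; rewrite /nblack in lo hi; lia.
Qed.
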